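(* If $X$ is a uniformly joinable uniform space and $x_0\in X$, then $\mathrm{pro}\text{-}\pi_1(GP(X,x_0),y_0)$ is trivial, where $y_0$ is the constant generalized path at $x_0$.
   Context: $R(Z,E)$ is the Rips complex of a uniform space $Z$ (vertex set $Z$, simplices the finite $F$ with $F\times F\subset E$); $e(x,y)$ is the edge-path. $\mathrm{pro}\text{-}\pi_1(Z,z)=\{\pi_1(R(Z,E),z)\}_E$ (reverse inclusion, inclusion-induced maps); it is trivial if for every $E$ there is $F\subset E$ with $\pi_1(R(Z,F),z)\to\pi_1(R(Z,E),z)$ trivial. Paths $c,d$ in $R(X,E)$ with end-points in $X$ are $E$-homotopic if their initial points $x_c,x_d$ and terminal points $y_c,y_d$ satisfy $(x_c,x_d),(y_c,y_d)\in E$ and $c\simeq e(x_c,x_d)\ast d\ast e(y_d,y_c)$ rel. end-points in $R(X,E)$. A generalized path from $x$ to $y$ is a family $\{[c_E]\}_E$ of homotopy classes rel. end-points of paths from $x$ to $y$ in $R(X,E)$ with $c_F\simeq c_E$ in $R(X,E)$ for $F\subset E$; it is $F$-short if $(x,y)\in F$ and $c_F\simeq e(x,y)$ in $R(X,F)$. $GP(X,x_0)$ is the set of generalized paths starting at $x_0$ with the uniform structure whose base consists of the sets $F^\ast$ of pairs $(c,d)$ with $c_F$ $F$-homotopic to $d_F$. $X$ is uniformly joinable if for each entourage $E$ there is an entourage $F$ such that any $(x,y)\in F$ are joined by an $E$-short generalized path. *)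

From Stdlib Require Import List Relations.
Import ListNotations.
Set Implicit Arguments.

Record UniformSpace : Type := {
  carrier :> Type;
  entourage : (carrier -> carrier -> Prop) -> Prop }.

Definition subrel {T : Type} (F E : T -> T -> Prop) : Prop :=
  forall a b, F a b -> E a b.

Definition is_uniform (X : UniformSpace) : Prop :=
  (exists E, entourage X E) /\
  (forall E, entourage X E -> forall x, E x x) /\
  (forall E F, entourage X E -> subrel E F -> entourage X F) /\
  (forall E F, entourage X E -> entourage X F ->
       entourage X (fun a b => E a b /\ F a b)) /\
  (forall E, entourage X E -> entourage X (fun a b => E b a)) /\
  (forall E, entourage X E -> exists F, entourage X F /\
       forall a b c, F a b -> F b c -> E a c).

Section Rips.
Variable T : Type.
Variable E : T -> T -> Prop.

(* {a,b} is a simplex of R(T,E): {a,b} x {a,b} is contained in E. *)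
Definition Redge (a b : T) : Prop := E a a /\ E a b /\ E b a /\ E b b.

Definition Rsimplex3 (u v w : T) : Prop :=
  Redge u v /\ Redge v w /\ Redge u w.

Fixpoint echain (p : list T) : Prop :=
  match p with
  | a :: ((b :: _) as q) => Redge a b /\ echain q
  | _ => True
  end.

Definition is_epath (x y : T) (p : list T) : Prop :=
  hd_error p = Some x /\ last p x = y /\ echain p.

Inductive ep_step : list T -> list T -> Prop :=
| ep_dup : forall l1 u l2, ep_step (l1 ++ u :: u :: l2) (l1 ++ u :: l2)
| ep_tri : forall l1 u v w l2, Rsimplex3 u v w ->
    ep_step (l1 ++ u :: v :: w :: l2) (l1 ++ u :: w :: l2).

(* edge-path equivalence = homotopy rel. end-points in R(T,E) *)
Definition ep_equiv : list T -> list T -> Prop :=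
  clos_refl_sym_trans (list T) ep_step.

End Rips.

Definition pro_pi1_trivial (Z : UniformSpace) (z : Z) : Prop :=
  forall E, entourage Z E ->
    exists F, entourage Z F /\ subrel F E /\
      forall p, is_epath F z z p -> ep_equiv E p [z].

(* A generalized path starting at x0 (ending at gp_end): for each entourage
   E, gp_cls E is a homotopy class rel. end-points of edge paths from x0 to
   gp_end in R(X,E) (a set of edge paths); the classes are compatible.
   For non-entourages the field is empty (so that the record is determined
   by its genuine data). *)
Record GPath (X : UniformSpace) (x0 : X) : Type := {
  gp_end : X;
  gp_cls : (X -> X -> Prop) -> list X -> Prop;
  gp_junk : forall E, ~ entourage X E -> forall p, ~ gp_cls E p;
  gp_class : forall E, entourage X E ->
    exists c, is_epath E x0 gp_end c /\
      forall d, gp_cls E d <-> (is_epath E x0 gp_end d /\ ep_equiv E d c);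
  gp_compat : forall E F, entourage X E -> entourage X F -> subrel F E ->
    forall d, gp_cls F d -> gp_cls E d }.

Definition F_homotopic (X : Type) (F : X -> X -> Prop) (c d : list X) : Prop :=
  exists xc yc xd yd,
    is_epath F xc yc c /\ is_epath F xd yd d /\ F xc xd /\ F yc yd /\
    ep_equiv F c (xc :: d ++ [yc]).

Definition Fstar (X : UniformSpace) (x0 : X) (F : X -> X -> Prop)
    (c d : GPath X x0) : Prop :=
  exists pc pd, gp_cls c F pc /\ gp_cls d F pd /\ F_homotopic F pc pd.

Definition GP (X : UniformSpace) (x0 : X) : UniformSpace := {|
  carrier := GPath X x0;
  entourage := fun R => exists F, entourage X F /\ subrel (Fstar F) R |}.

Definition E_short (X : UniformSpace) (E : X -> X -> Prop) (x y : X)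
    (c : GPath X x) : Prop :=
  gp_end c = y /\ E x y /\ gp_cls c E [x; y].

Definition uniformly_joinable (X : UniformSpace) : Prop :=
  forall E, entourage X E -> exists F, entourage X F /\
    forall x y, F x y -> exists c : GPath X x, @E_short X E x y c.

Definition is_constant_gpath (X : UniformSpace) (x0 : X) (y0 : GPath X x0)
  : Prop :=
  gp_end y0 = x0 /\ forall E, entourage X E -> gp_cls y0 E [x0].

From Stdlib Require Import List Relations ClassicalEpsilon.
Import ListNotations.
Set Implicit Arguments.

(* Fix a basic entourage [Fstar F] of GP(X, x0), let G1 be given by uniform joinability for F,
   and put G = G1 /\ F.  A G-chain w from x0 lifts to a generalized path [lift w]: at every
   scale E, replace each edge of w by an E-representative of a chosen F-short generalized path.
   The initial segments of w form a path of pairwise F-close chains, which [lift] maps to a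
   "cone" in R(GP, Fstar F) from [lift [x0]] to [lift w].  Given a loop y0 = c_0, ..., c_n = y0
   in R(GP, Fstar G), pick G-representatives p_i of the c_i.  Each c_i is Fstar F-close to
   [lift p_i], and since p_i and p_(i+1) are G-homotopic up to a last edge, the cones over them
   bound a null-homotopic loop: an elementary homotopy of chains is swept out by a ladder of
   3-simplices of initial segments.  Filling the squares c_i, c_(i+1), lift p_(i+1), lift p_i and
   the cones contracts the loop in R(GP, Fstar F). *)

Lemma exists_snoc {T} (l : list T) (d : T) : l <> [] -> exists m, l = m ++ [last l d].
Proof. intros Hl. exists (removelast l). now apply app_removelast_last. Qed.
Arguments exists_snoc {T} l d _.

(** * Edge paths in Rips complexes *)

Section EdgePaths.
Variable T : Type.
Implicit Types (E : T -> T -> Prop) (l p q : list T).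

Lemma last_app_cons l1 l2 (a d : T) : last (l1 ++ a :: l2) d = last (a :: l2) d.
Proof.
  induction l1 as [|b l1 IH]; simpl; auto.
  rewrite IH. destruct l1; reflexivity.
Qed.

Lemma last_cons_default (b : T) q d d' : last (b :: q) d = last (b :: q) d'.
Proof. revert b; induction q as [|c q IH]; intros b; simpl in *; auto. Qed.

Lemma last_map U (f : T -> U) l d : last (map f l) (f d) = f (last l d).
Proof. induction l as [|a [|b l] IH]; simpl in *; auto. Qed.

Lemma ep_equiv_refl E l : ep_equiv E l l.
Proof. apply rst_refl. Qed.

Lemma ep_equiv_sym E l l' : ep_equiv E l l' -> ep_equiv E l' l.
Proof. apply rst_sym. Qed.

Lemma ep_equiv_trans E l1 l2 l3 :
  ep_equiv E l1 l2 -> ep_equiv E l2 l3 -> ep_equiv E l1 l3.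
Proof. apply rst_trans. Qed.

Lemma ep_equiv_dup E p u q : ep_equiv E (p ++ u :: u :: q) (p ++ u :: q).
Proof. apply rst_step; constructor. Qed.

Lemma ep_equiv_tri E p u v w q : Rsimplex3 E u v w ->
  ep_equiv E (p ++ u :: v :: w :: q) (p ++ u :: w :: q).
Proof. intros; apply rst_step; constructor; auto. Qed.

Lemma ep_step_app E p q l l' :
  ep_step E l l' -> ep_step E (p ++ l ++ q) (p ++ l' ++ q).
Proof.
  intros [l1 u l2 | l1 u v w l2 H];
    [ pose proof (ep_dup E (p ++ l1) u (l2 ++ q)) as S
    | pose proof (ep_tri (p ++ l1) (l2 ++ q) H) as S ];
    rewrite <- !app_assoc in *; simpl in *; exact S.
Qed.

Lemma ep_equiv_app E p q l l' :
  ep_equiv E l l' -> ep_equiv E (p ++ l ++ q) (p ++ l' ++ q).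
Proof.
  induction 1.
  - apply rst_step, ep_step_app; auto.
  - apply rst_refl.
  - now apply rst_sym.
  - eapply rst_trans; eauto.
Qed.

Lemma ep_equiv_app_l E p l l' : ep_equiv E l l' -> ep_equiv E (p ++ l) (p ++ l').
Proof. intros H. pose proof (ep_equiv_app p [] H). now rewrite !app_nil_r in *. Qed.

Lemma ep_equiv_app_r E q l l' : ep_equiv E l l' -> ep_equiv E (l ++ q) (l' ++ q).
Proof. exact (ep_equiv_app [] q (l := l) (l' := l')). Qed.

Lemma Redge_sym E a b : Redge E a b -> Redge E b a.
Proof. unfold Redge; tauto. Qed.

Lemma Redge_refl_l E a b : Redge E a b -> Redge E a a.
Proof. unfold Redge; tauto. Qed.

Lemma Redge_refl_r E a b : Redge E a b -> Redge E b b.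
Proof. unfold Redge; tauto. Qed.

Lemma Redge_mono E E' a b : subrel E E' -> Redge E a b -> Redge E' a b.
Proof. intros S (?&?&?&?); repeat split; auto. Qed.

Lemma Rsimplex3_back E a b : Redge E a b -> Rsimplex3 E a b a.
Proof. intros (?&?&?&?); repeat split; auto. Qed.

Lemma ep_equiv_map U E (E' : U -> U -> Prop) (f : T -> U) l l' :
  (forall a b, Redge E a b -> Redge E' (f a) (f b)) ->
  ep_equiv E l l' -> ep_equiv E' (map f l) (map f l').
Proof.
  intros Hf. induction 1 as [l l' []| | |].
  - rewrite !map_app; apply rst_step, ep_dup.
  - rewrite !map_app; apply rst_step, ep_tri. destruct H as (?&?&?); split; auto.
  - apply rst_refl.
  - now apply rst_sym.
  - eapply rst_trans; eauto.
Qed.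

Lemma ep_equiv_mono E E' l l' : subrel E E' -> ep_equiv E l l' -> ep_equiv E' l l'.
Proof.
  intros S H. rewrite <- (map_id l), <- (map_id l').
  apply (ep_equiv_map (E := E)); auto. intros a b; now apply Redge_mono.
Qed.

Lemma ep_equiv_rev E l l' : ep_equiv E l l' -> ep_equiv E (rev l) (rev l').
Proof.
  induction 1 as [l l' []| | |].
  - rewrite !rev_app_distr; simpl; rewrite <- !app_assoc. apply ep_equiv_dup.
  - rewrite !rev_app_distr; simpl; rewrite <- !app_assoc. apply ep_equiv_tri.
    destruct H as (?&?&?); split; [|split]; now apply Redge_sym.
  - apply ep_equiv_refl.
  - now apply ep_equiv_sym.
  - eapply ep_equiv_trans; eauto.
Qed.

Lemma ep_equiv_ends E l l' :
  ep_equiv E l l' -> hd_error l = hd_error l' /\ forall d, last l d = last l' d.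
Proof.
  induction 1 as [l l' []| | |].
  - split; [now destruct l1|]. intros d; rewrite !last_app_cons; now destruct l2.
  - split; [now destruct l1|]. intros d; rewrite !last_app_cons; now destruct l2.
  - auto.
  - firstorder.
  - firstorder congruence.
Qed.

Lemma echain_app E l1 a l2 :
  echain E (l1 ++ a :: l2) <-> echain E (l1 ++ [a]) /\ echain E (a :: l2).
Proof.
  induction l1 as [|b [|c l1] IH]; simpl in *.
  - destruct l2; simpl; tauto.
  - destruct l2; simpl; tauto.
  - rewrite IH. tauto.
Qed.

Lemma echain_app_l E l1 l2 : echain E (l1 ++ l2) -> echain E l1.
Proof.
  induction l1 as [|a [|b l1] IH]; simpl in *; auto. intros [H1 H2]; exact (conj H1 (IH H2)).
Qed.

Lemma echain_map U E (E' : U -> U -> Prop) (f : T -> U) l :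
  (forall a b, Redge E a b -> Redge E' (f a) (f b)) -> echain E l -> echain E' (map f l).
Proof.
  intros Hf. induction l as [|a [|b l] IH]; simpl in *; auto.
  intros [H1 H2]; exact (conj (Hf _ _ H1) (IH H2)).
Qed.

Lemma echain_mono E E' l : subrel E E' -> echain E l -> echain E' l.
Proof.
  intros S H. rewrite <- (map_id l). apply (echain_map (E := E)); auto.
  intros a b; now apply Redge_mono.
Qed.

Lemma echain_snoc_edge E q t d : echain E (q ++ [t]) -> q <> [] -> Redge E (last q d) t.
Proof.
  intros H Hq. destruct (exists_snoc q d Hq) as [m Hm]. rewrite Hm, <- app_assoc in H.
  apply echain_app in H. simpl in H. tauto.
Qed.

Lemma ep_equiv_echain E l l' : (forall a, E a a) -> ep_equiv E l l' -> (echain E l <-> echain E l').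
Proof.
  intros Hrefl. induction 1 as [l l' []| | |]; try tauto.
  - rewrite (echain_app E l1 u (u :: l2)), (echain_app E l1 u l2). simpl.
    assert (Redge E u u) by (repeat split; apply Hrefl). tauto.
  - rewrite (echain_app E l1 u (v :: w :: l2)), (echain_app E l1 u (w :: l2)). simpl.
    destruct H as (?&?&?). tauto.
Qed.

Lemma echain_rev E l : echain E l -> echain E (rev l).
Proof.
  induction l as [|a [|b l] IH]; simpl in *; auto. intros [H1 H2].
  rewrite <- app_assoc. apply echain_app. simpl; split; auto.
  split; auto. now apply Redge_sym.
Qed.

Lemma ep_equiv_backtrack E p v m c q :
  echain E (v :: m ++ [c]) ->
  ep_equiv E (p ++ v :: m ++ c :: rev m ++ v :: q) (p ++ v :: q).
Proof.
  revert p v q. induction m as [|w m IH]; intros p v q H; simpl in *.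
  - eapply ep_equiv_trans; [apply ep_equiv_tri, Rsimplex3_back, H|]. apply ep_equiv_dup.
  - destruct H as [Hvw H]. rewrite <- app_assoc.
    pose proof (IH (p ++ [v]) w (v :: q) H) as IH'. rewrite <- !app_assoc in IH'.
    eapply ep_equiv_trans; [exact IH'|].
    eapply ep_equiv_trans; [apply ep_equiv_tri, Rsimplex3_back, Hvw|]. apply ep_equiv_dup.
Qed.

Lemma ep_equiv_app_rev E l j : echain E l -> hd_error l = Some j ->
  ep_equiv E (l ++ rev l) [j].
Proof.
  intros Hl Hj. destruct l as [|j' t]; [discriminate|]. injection Hj as ->.
  destruct t as [|c m _] using rev_ind; [apply (ep_equiv_dup E [] j [])|].
  change (rev (j :: m ++ [c])) with (rev (m ++ [c]) ++ [j]).
  rewrite rev_unit. simpl. rewrite <- app_assoc. simpl.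
  eapply ep_equiv_trans; [apply (ep_equiv_dup E (j :: m))|].
  apply (ep_equiv_backtrack E [] j m c []); auto.
Qed.

Lemma ep_equiv_reroute E K B C Z j :
  hd_error B = Some j -> echain E B -> ep_equiv E (B ++ rev C) [j] ->
  ep_equiv E (K ++ last B j :: rev C ++ Z) (K ++ rev B ++ Z).
Proof.
  intros Hj HB Hloop.
  destruct (exists_snoc B j) as [m Hm]; [now destruct B|].
  assert (Hback : ep_equiv E (rev B ++ B) [last B j]).
  { rewrite <- (rev_involutive B) at 2. apply ep_equiv_app_rev; [now apply echain_rev|].
    rewrite Hm at 1. now rewrite rev_unit. }
  destruct B as [|j' Bt]; [discriminate|]. injection Hj as ->.
  eapply ep_equiv_trans; [apply ep_equiv_sym, (ep_equiv_app K (rev C ++ Z) Hback)|].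
  pose proof (ep_equiv_app (K ++ rev (j :: Bt)) Z Hloop) as Hcut.
  rewrite <- !app_assoc in *. eapply ep_equiv_trans; [exact Hcut|].
  simpl rev. rewrite <- !app_assoc. simpl. apply (ep_equiv_app_l K), ep_equiv_dup.
Qed.

Definition Rsimplex4 E (a b c d : T) : Prop :=
  Redge E a b /\ Redge E a c /\ Redge E a d /\ Redge E b c /\ Redge E b d /\ Redge E c d.

Fixpoint ladder E (x y : T) (rungs : list (T * T)) : Prop :=
  match rungs with
  | [] => True
  | (x', y') :: rest => Rsimplex4 E x y x' y' /\ ladder E x' y' rest
  end.

Lemma ep_equiv_ladder E rungs : forall p x y q, ladder E x y rungs ->
  ep_equiv E (p ++ x :: map fst rungs ++ rev (map snd rungs) ++ y :: q) (p ++ x :: y :: q).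
Proof.
  induction rungs as [|[x' y'] rungs IH]; intros p x y q H; simpl in *.
  - apply ep_equiv_refl.
  - destruct H as [(Hxy&Hxx'&Hxy'&Hyx'&Hyy'&Hx'y') H].
    pose proof (IH (p ++ [x]) x' y' (y :: q) H) as IH'.
    rewrite <- !app_assoc in *. simpl in *.
    eapply ep_equiv_trans; [exact IH'|].
    eapply ep_equiv_trans; [apply ep_equiv_tri; split; [|split]; auto using Redge_sym|].
    apply ep_equiv_tri; split; [|split]; auto using Redge_sym.
Qed.

Lemma is_epath_app E (a b c : T) p q :
  is_epath E a b p -> is_epath E b c (b :: q) -> is_epath E a c (p ++ q).
Proof.
  intros (Hh&Hl&Hp) (_&Hl'&Hq).
  destruct (exists_snoc p a) as [m Hm]; [now destruct p|]. rewrite Hl in Hm. subst p.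
  rewrite <- app_assoc in *. simpl in *. split; [|split].
  - now destruct m.
  - now rewrite last_app_cons, (last_cons_default b q a b).
  - now apply echain_app.
Qed.

Lemma ep_equiv_concat E (a z : T) p p' q q' :
  hd_error p = Some a -> last p a = z ->
  ep_equiv E p p' -> ep_equiv E (z :: q) (z :: q') -> ep_equiv E (p ++ q) (p' ++ q').
Proof.
  intros Hh Hl Hp Hq.
  eapply ep_equiv_trans; [apply ep_equiv_app_r, Hp|].
  destruct (ep_equiv_ends Hp) as [Hh' Hla].
  destruct (exists_snoc p' a) as [m Hm]; [intros ->; rewrite Hh in Hh'; discriminate|].
  rewrite <- Hla, Hl in Hm. rewrite Hm, <- !app_assoc. apply ep_equiv_app_l, Hq.
Qed.

End EdgePaths.

Fixpoint prefixes T (l : list T) : list (list T) :=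
  match l with
  | [] => []
  | a :: t => [a] :: map (cons a) (prefixes t)
  end.

Lemma prefixes_app T (l r : list T) : prefixes (l ++ r) = prefixes l ++ map (app l) (prefixes r).
Proof.
  induction l as [|a l IH]; simpl.
  - symmetry. apply map_id.
  - now rewrite IH, map_app, map_map.
Qed.

Lemma prefixes_snoc T (l : list T) a : prefixes (l ++ [a]) = prefixes l ++ [l ++ [a]].
Proof. apply prefixes_app. Qed.

Lemma prefixes_last T (l : list T) : l <> [] -> exists P, prefixes l = P ++ [l].
Proof.
  induction l as [|a l _] using rev_ind; intros H; [congruence|].
  rewrite prefixes_snoc. eauto.
Qed.

(** * Generalized paths *)

Section Classes.
Variable X : UniformSpace.
Variable x : X.
Implicit Types (E : X -> X -> Prop) (c : GPath X x) (p q : list X).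

Lemma gp_cls_epath {c E p} : entourage X E -> gp_cls c E p -> is_epath E x (gp_end c) p.
Proof. intros HE H. destruct (gp_class c E HE) as (c0&_&Hc). now apply Hc in H. Qed.

Lemma gp_cls_equiv {c E p q} : entourage X E -> gp_cls c E p -> gp_cls c E q -> ep_equiv E p q.
Proof.
  intros HE Hp Hq. destruct (gp_class c E HE) as (c0&_&Hc).
  apply Hc in Hp, Hq. eapply ep_equiv_trans; [apply Hp|]. now apply ep_equiv_sym.
Qed.

Lemma gp_cls_exists c E : entourage X E -> exists p, gp_cls c E p.
Proof.
  intros HE. destruct (gp_class c E HE) as (c0&H0&Hc).
  exists c0. apply Hc. split; [exact H0|apply ep_equiv_refl].
Qed.

End Classes.

Lemma Fstar_mono (X : UniformSpace) (x0 : X) (F G : X -> X -> Prop) (c d : GPath X x0) :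
  entourage X F -> entourage X G -> subrel G F -> Fstar G c d -> Fstar F c d.
Proof.
  intros HF HG S (pc&pd&Hc&Hd&(xc&yc&xd&yd&(Hc1&Hc2&Hc3)&(Hd1&Hd2&Hd3)&Hx&Hy&Hcd)).
  exists pc, pd. split; [exact (gp_compat c HF HG S pc Hc)|].
  split; [exact (gp_compat d HF HG S pd Hd)|].
  exists xc, yc, xd, yd. repeat split; auto.
  - eapply echain_mono; eauto.
  - eapply echain_mono; eauto.
  - eapply ep_equiv_mono; eauto.
Qed.

Section Subdivision.
Variable X : UniformSpace.
Variables F G1 : X -> X -> Prop.
Hypothesis HF : entourage X F.
Hypothesis Hjoin : forall x y, G1 x y -> exists c : GPath X x, @E_short X F x y c.
Implicit Types (E : X -> X -> Prop) (a b : X) (w : list X).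

Definition short_gpath a b : option (GPath X a) :=
  epsilon (inhabits None) (fun o => exists c, o = Some c /\ @E_short X F a b c).

(* Meaningful only when [G1 a b] and [E] is an entourage; otherwise the value is junk. *)
Definition short_rep a b E : list X :=
  match short_gpath a b with
  | Some c => epsilon (inhabits [a; b]) (gp_cls c E)
  | None => [a; b]
  end.

Lemma short_rep_spec a b : G1 a b -> exists c : GPath X a,
  @E_short X F a b c /\ forall E, entourage X E -> gp_cls c E (short_rep a b E).
Proof.
  intros Hab. unfold short_rep, short_gpath.
  assert (Hex : exists o, exists c, o = Some c /\ @E_short X F a b c).
  { destruct (Hjoin Hab) as [c Hc]. eauto. }
  destruct (epsilon_spec (inhabits None) _ Hex) as (c&->&Hc).
  exists c. split; [exact Hc|]. intros E HE.
  apply epsilon_spec, gp_cls_exists, HE.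
Qed.

Lemma short_rep_epath a b E : G1 a b -> entourage X E -> is_epath E a b (short_rep a b E).
Proof.
  intros Hab HE. destruct (short_rep_spec Hab) as (c&(<-&_)&Hc).
  exact (gp_cls_epath HE (Hc E HE)).
Qed.

Lemma short_rep_compat a b E E' : G1 a b -> entourage X E -> entourage X E' -> subrel E' E ->
  ep_equiv E (short_rep a b E') (short_rep a b E).
Proof.
  intros Hab HE HE' S. destruct (short_rep_spec Hab) as (c&_&Hc).
  eapply gp_cls_equiv; [exact HE| eapply gp_compat | ]; eauto.
Qed.

Lemma short_rep_F a b : G1 a b -> ep_equiv F (short_rep a b F) [a; b].
Proof.
  intros Hab. destruct (short_rep_spec Hab) as (c&(_&_&Hs)&Hc).
  eapply gp_cls_equiv; eauto.
Qed.

Fixpoint subdivide E w : list X :=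
  match w with
  | a :: ((b :: _) as t) => short_rep a b E ++ tl (subdivide E t)
  | _ => w
  end.

Lemma subdivide_epath E w a : entourage X E -> hd_error w = Some a -> echain G1 w ->
  is_epath E a (last w a) (subdivide E w).
Proof.
  intros HE. revert a. induction w as [|a' [|b t] IH]; intros a Ha Hw;
    [discriminate| injection Ha as <-; now repeat split| injection Ha as <-].
  destruct Hw as [(_&Hab&_) Hw].
  destruct (IH b eq_refl Hw) as (Hh&Hl&Hc).
  change (subdivide E (a' :: b :: t)) with (short_rep a' b E ++ tl (subdivide E (b :: t))).
  destruct (subdivide E (b :: t)) as [|b' q]; [discriminate|]. injection Hh as ->.
  replace (last (a' :: b :: t) a') with (last (b :: t) b) by exact (last_cons_default b t b a').
  apply is_epath_app with b; [now apply short_rep_epath|]. repeat split; auto.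
Qed.

Lemma subdivide_cons E b t : entourage X E -> echain G1 (b :: t) ->
  exists q, subdivide E (b :: t) = b :: q.
Proof.
  intros HE Hw. destruct (subdivide_epath E (b :: t) HE eq_refl Hw) as (Hh&_&_).
  destruct (subdivide E (b :: t)) as [|b' q]; [discriminate|]. injection Hh as ->. eauto.
Qed.

Lemma subdivide_compat E E' w : entourage X E -> entourage X E' -> subrel E' E ->
  echain G1 w -> ep_equiv E (subdivide E' w) (subdivide E w).
Proof.
  intros HE HE' S. induction w as [|a [|b t] IH]; intros Hw; try apply ep_equiv_refl.
  destruct Hw as [(_&Hab&_) Hw].
  change (ep_equiv E (short_rep a b E' ++ tl (subdivide E' (b :: t)))
                     (short_rep a b E ++ tl (subdivide E (b :: t)))).
  destruct (subdivide_cons E b t HE Hw) as [q Hq], (subdivide_cons E' b t HE' Hw) as [q' Hq'].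
  specialize (IH Hw). rewrite Hq, Hq' in *.
  destruct (short_rep_epath E' Hab HE') as (Hh&Hl&_).
  apply (ep_equiv_concat Hh Hl); [now apply short_rep_compat | exact IH].
Qed.

Lemma subdivide_F w : echain G1 w -> ep_equiv F (subdivide F w) w.
Proof.
  induction w as [|a [|b t] IH]; intros Hw; try apply ep_equiv_refl.
  destruct Hw as [(_&Hab&_) Hw].
  change (ep_equiv F (short_rep a b F ++ tl (subdivide F (b :: t))) ([a; b] ++ t)).
  destruct (subdivide_cons F b t HF Hw) as [q Hq].
  specialize (IH Hw). rewrite Hq in *.
  destruct (short_rep_epath F Hab HF) as (Hh&Hl&_).
  apply (ep_equiv_concat Hh Hl); [now apply short_rep_F | exact IH].
Qed.

End Subdivision.

Arguments short_rep {X} F a b E.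
Arguments subdivide {X} F E w.

(** * Contracting loops of GP(X, x0) *)

Section Contraction.
Variable X : UniformSpace.
Variable x0 : X.
Hypothesis entourage_refl : forall E, entourage X E -> forall x, E x x.
Variables F G1 G : X -> X -> Prop.
Hypothesis HF : entourage X F.
Hypothesis Hjoin : forall x y, G1 x y -> exists c : GPath X x, @E_short X F x y c.
Hypothesis HG : entourage X G.
Hypothesis HGG1 : subrel G G1.
Hypothesis HGF : subrel G F.
Implicit Types (E : X -> X -> Prop) (p q u v w : list X).

Definition rooted w : Prop := hd_error w = Some x0 /\ echain G w.

Lemma rooted_singleton : rooted [x0].
Proof. now split. Qed.

Lemma rooted_ne w : rooted w -> w <> [].
Proof. intros [H _] ->. discriminate. Qed.

Lemma rooted_app_l q r : rooted (q ++ r) -> q <> [] -> rooted q.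
Proof.
  intros [Hh Hc] Hq. split; [now destruct q|]. eapply echain_app_l; eauto.
Qed.

Lemma rooted_equiv p q : ep_equiv G p q -> rooted p -> rooted q.
Proof.
  intros H [Hh Hc]. destruct (ep_equiv_ends H) as [Hh' _]. split; [congruence|].
  apply (ep_equiv_echain (entourage_refl G HG) H), Hc.
Qed.

Definition lift_cls w E p : Prop :=
  entourage X E /\ is_epath E x0 (last w x0) p /\ ep_equiv E p (subdivide F E w).

Lemma lift_cls_class w : rooted w -> forall E, entourage X E ->
  exists c, is_epath E x0 (last w x0) c /\
    forall d, lift_cls w E d <-> is_epath E x0 (last w x0) d /\ ep_equiv E d c.
Proof.
  intros [Hh Hc] E HE. exists (subdivide F E w). split.
  - apply (subdivide_epath G1 Hjoin); auto. eapply echain_mono; eauto.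
  - intros d. unfold lift_cls. tauto.
Qed.

Lemma lift_cls_compat w : rooted w -> forall E E', entourage X E -> entourage X E' ->
  subrel E' E -> forall d, lift_cls w E' d -> lift_cls w E d.
Proof.
  intros Hw E E' HE HE' S d (_&(Hh&Hl&Hc)&Hd). split; [exact HE|split].
  - repeat split; auto. eapply echain_mono; eauto.
  - eapply ep_equiv_trans; [eapply ep_equiv_mono; eauto|].
    apply (subdivide_compat G1 Hjoin); auto. eapply echain_mono; [|apply Hw]; auto.
Qed.

Definition lift_of_rooted w (Hw : rooted w) : GPath X x0 := {|
  gp_end := last w x0;
  gp_cls := lift_cls w;
  gp_junk := fun E HE p Hp => HE (proj1 Hp);
  gp_class := lift_cls_class Hw;
  gp_compat := lift_cls_compat Hw |}.

Definition lift w : GPath X x0 :=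
  match excluded_middle_informative (rooted w) with
  | left Hw => lift_of_rooted Hw
  | right _ => lift_of_rooted rooted_singleton
  end.

Lemma lift_cls_F w : rooted w -> gp_cls (lift w) F w.
Proof.
  intros Hw. unfold lift.
  destruct (excluded_middle_informative (rooted w)) as [Hw'|]; [simpl|tauto].
  destruct Hw as [Hh Hc]. split; [exact HF|split].
  - repeat split; auto. eapply echain_mono; eauto.
  - apply ep_equiv_sym, (subdivide_F G1 HF Hjoin). eapply echain_mono; eauto.
Qed.

(* [close p q] is the relation [Fstar F] read on representatives of [F]-classes. *)
Definition close p q : Prop := F (last p x0) (last q x0) /\ ep_equiv F p (q ++ [last p x0]).

Lemma close_of_equiv p q : ep_equiv F p q -> q <> [] -> close p q.
Proof.
  intros H Hq. destruct (ep_equiv_ends H) as [_ Hl]. unfold close. rewrite !Hl. split.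
  - now apply entourage_refl.
  - eapply ep_equiv_trans; [apply H|].
    destruct (exists_snoc q x0 Hq) as [m Hm]. rewrite Hm at 1 2. rewrite <- app_assoc.
    apply ep_equiv_sym, (ep_equiv_dup F m _ []).
Qed.

Lemma close_snoc p t : p <> [] -> Redge F (last p x0) t ->
  close p (p ++ [t]) /\ close (p ++ [t]) p.
Proof.
  intros Hp He. unfold close. rewrite !last_last. split; split.
  - apply He.
  - destruct (exists_snoc p x0 Hp) as [m Hm]. rewrite Hm at 1 2. rewrite <- !app_assoc.
    apply ep_equiv_sym. eapply ep_equiv_trans.
    + apply (ep_equiv_tri m), Rsimplex3_back, He.
    + apply ep_equiv_dup.
  - apply He.
  - apply ep_equiv_refl.
Qed.

Lemma close_resp p p' q q' : ep_equiv F p p' -> ep_equiv F q q' -> close p q -> close p' q'.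
Proof.
  intros Hp Hq [H1 H2]. destruct (ep_equiv_ends Hp) as [_ Lp], (ep_equiv_ends Hq) as [_ Lq].
  unfold close. rewrite <- Lp, <- Lq. split; [exact H1|].
  eapply ep_equiv_trans; [apply ep_equiv_sym, Hp|].
  eapply ep_equiv_trans; [apply H2|]. now apply ep_equiv_app_r.
Qed.

Definition near p q : Prop := rooted p /\ rooted q /\ close p q.

Lemma Redge_near_of_equiv p q : rooted p -> ep_equiv G p q -> Redge near p q.
Proof.
  intros Hp H. assert (Hq := rooted_equiv H Hp).
  apply (ep_equiv_mono HGF) in H.
  assert (Hpn := rooted_ne Hp). assert (Hqn := rooted_ne Hq).
  assert (Cpp : close p p) by (apply close_of_equiv; auto using ep_equiv_refl).
  assert (Cqq : close q q) by (apply close_of_equiv; auto using ep_equiv_refl).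
  assert (Cpq : close p q) by (apply close_of_equiv; auto).
  assert (Cqp : close q p) by (apply close_of_equiv; auto using ep_equiv_sym).
  unfold Redge, near; tauto.
Qed.

Lemma Redge_near_of_equiv_snoc p q t : rooted p -> rooted q -> ep_equiv G q (p ++ [t]) ->
  Redge near p q.
Proof.
  intros Hp Hq H. assert (Hpt := rooted_equiv H Hq).
  assert (Hpn := rooted_ne Hp). assert (Hqn := rooted_ne Hq).
  destruct (close_snoc Hpn (Redge_mono HGF (echain_snoc_edge G t x0 (proj2 Hpt) Hpn)))
    as [Hppt Hptp].
  apply (ep_equiv_mono HGF) in H.
  assert (Cpp : close p p) by (apply close_of_equiv; auto using ep_equiv_refl).
  assert (Cqq : close q q) by (apply close_of_equiv; auto using ep_equiv_refl).
  assert (Cpq : close p q)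
    by (eapply close_resp; [apply ep_equiv_refl|apply ep_equiv_sym, H|exact Hppt]).
  assert (Cqp : close q p)
    by (eapply close_resp; [apply ep_equiv_sym, H|apply ep_equiv_refl|exact Hptp]).
  unfold Redge, near; tauto.
Qed.

Lemma Redge_near_snoc q t : rooted (q ++ [t]) -> q <> [] -> Redge near q (q ++ [t]).
Proof.
  intros Hqt Hq. apply Redge_near_of_equiv_snoc with t; auto using ep_equiv_refl.
  eapply rooted_app_l; eauto.
Qed.

Lemma prefixes_chain w : rooted w -> echain near (prefixes w).
Proof.
  induction w as [|a w IH] using rev_ind; intros H; [exact I|].
  destruct w as [|b w'] eqn:Ew; [exact I|]. rewrite <- Ew in *.
  assert (Hw : w <> []) by (subst; discriminate).
  rewrite prefixes_snoc. destruct (prefixes_last Hw) as [P HP]. rewrite HP.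
  rewrite <- app_assoc. apply echain_app. split.
  - rewrite <- HP. apply IH. eapply rooted_app_l; eauto.
  - split; [now apply Redge_near_snoc | exact I].
Qed.

Lemma prefixes_hd w : rooted w -> hd_error (prefixes w) = Some [x0].
Proof. intros [H _]. destruct w as [|a w]; [discriminate|]. now injection H as ->. Qed.

Definition prefix_loop u v : Prop := ep_equiv near (prefixes u ++ rev (prefixes v)) [[x0]].

Lemma prefix_loop_refl u : rooted u -> prefix_loop u u.
Proof.
  intros Hu. apply ep_equiv_app_rev; [now apply prefixes_chain | now apply prefixes_hd].
Qed.

Lemma prefix_loop_sym u v : prefix_loop u v -> prefix_loop v u.
Proof.
  unfold prefix_loop. intros H. apply ep_equiv_rev in H.
  now rewrite rev_app_distr, rev_involutive in H.
Qed.

Lemma prefix_loop_trans u v w : Rsimplex3 near u v w ->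
  prefix_loop u v -> prefix_loop v w -> prefix_loop u w.
Proof.
  intros H3 Huv Hvw.
  pose proof H3 as ((_&(Hu&Hv&_)&_)&(_&(_&Hw&_)&_)&_).
  destruct (prefixes_last (rooted_ne Hu)) as [Pu Eu].
  destruct (prefixes_last (rooted_ne Hv)) as [Pv Ev].
  destruct (prefixes_last (rooted_ne Hw)) as [Pw Ew].
  pose proof (ep_equiv_reroute (prefixes u) (prefixes v) (prefixes w) []
    (prefixes_hd Hv) (prefixes_chain Hv) Hvw) as S.
  rewrite !app_nil_r, Ev, last_last, <- Ev in S.
  eapply ep_equiv_trans; [|eapply ep_equiv_trans; [apply S|exact Huv]].
  unfold prefix_loop. rewrite Eu, Ew, rev_app_distr. simpl. rewrite <- !app_assoc. simpl.
  apply ep_equiv_sym, ep_equiv_tri. exact H3.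
Qed.

Lemma Rsimplex4_near_first_rung l t : rooted l -> rooted (l ++ [t]) ->
  Rsimplex4 near l l (l ++ [t]) l.
Proof.
  intros Hl Hlt.
  assert (Hll : Redge near l l) by (apply Redge_near_of_equiv, ep_equiv_refl; exact Hl).
  assert (Hllt : Redge near l (l ++ [t])) by (apply Redge_near_snoc; auto using rooted_ne).
  repeat split; try apply Hll; try apply Hllt.
Qed.

Lemma Rsimplex4_near_square A B t : rooted A -> rooted (A ++ [t]) -> rooted (B ++ [t]) ->
  ep_equiv G A B -> Rsimplex4 near A B (A ++ [t]) (B ++ [t]).
Proof.
  intros HA HAt HBt H. assert (HB := rooted_equiv H HA).
  split; [|split; [|split; [|split; [|split]]]].
  - now apply Redge_near_of_equiv.
  - apply Redge_near_snoc; auto using rooted_ne.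
  - apply Redge_near_of_equiv_snoc with t; auto. apply ep_equiv_app_r, ep_equiv_sym, H.
  - apply Redge_near_of_equiv_snoc with t; auto. apply ep_equiv_app_r, H.
  - apply Redge_near_snoc; auto using rooted_ne.
  - apply Redge_near_of_equiv; auto. apply ep_equiv_app_r, H.
Qed.

Lemma ladder_near_of_equiv r : forall A B, rooted A -> ep_equiv G A B ->
  rooted (A ++ r) -> rooted (B ++ r) ->
  ladder near A B (map (fun s => (A ++ s, B ++ s)) (prefixes r)).
Proof.
  induction r as [|t r IH]; intros A B HA H HAr HBr; simpl; auto.
  assert (HAt : rooted (A ++ [t])).
  { apply (rooted_app_l r); [now rewrite <- app_assoc | now destruct A]. }
  assert (HBt : rooted (B ++ [t])).
  { apply (rooted_app_l r); [now rewrite <- app_assoc |].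
    destruct B; [destruct (rooted_equiv H HA); discriminate | discriminate]. }
  split; [now apply Rsimplex4_near_square|].
  rewrite map_map.
  rewrite (map_ext (fun s => (A ++ t :: s, B ++ t :: s))
                   (fun s => ((A ++ [t]) ++ s, (B ++ [t]) ++ s)))
    by (intros s; now rewrite <- !app_assoc).
  apply IH; auto using ep_equiv_app_r; now rewrite <- app_assoc.
Qed.

Lemma prefix_loop_of_ladder l w w' Xs Ys rungs : rooted l ->
  prefixes w = prefixes l ++ Xs -> prefixes w' = prefixes l ++ Ys ->
  ladder near l l rungs -> map fst rungs = Xs -> map snd rungs = l :: Ys -> prefix_loop w w'.
Proof.
  intros Hl Hw Hw' HL H1 H2. unfold prefix_loop. rewrite Hw, Hw'.
  destruct (prefixes_last (rooted_ne Hl)) as [P HP].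
  assert (Hrefl := prefix_loop_refl Hl). unfold prefix_loop in Hrefl. rewrite HP in *.
  replace (((P ++ [l]) ++ Xs) ++ rev ((P ++ [l]) ++ Ys))
    with ((P ++ l :: Xs ++ rev Ys) ++ l :: rev P)
    by (rewrite !rev_app_distr; simpl; repeat (rewrite <- !app_assoc; simpl); reflexivity).
  eapply ep_equiv_trans; [apply ep_equiv_sym, ep_equiv_dup|].
  rewrite <- !app_assoc. simpl. rewrite <- app_assoc. simpl.
  pose proof (ep_equiv_ladder near rungs P l l (rev P) HL) as Hlad.
  rewrite H1, H2 in Hlad. simpl in Hlad. rewrite <- app_assoc in Hlad. simpl in Hlad.
  eapply ep_equiv_trans; [exact Hlad|].
  rewrite rev_app_distr in Hrefl. simpl in Hrefl. rewrite <- app_assoc in Hrefl. exact Hrefl.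
Qed.

Lemma prefix_loop_dup (l1 l2 : list X) (u : X) : rooted (l1 ++ u :: u :: l2) ->
  prefix_loop (l1 ++ u :: u :: l2) (l1 ++ u :: l2).
Proof.
  intros Hw.
  assert (Hw' := rooted_equiv (ep_equiv_dup G l1 u l2) Hw).
  set (a := l1 ++ [u]) in *.
  replace (l1 ++ u :: u :: l2) with (a ++ u :: l2) in * by (unfold a; now rewrite <- app_assoc).
  replace (l1 ++ u :: l2) with (a ++ l2) in * by (unfold a; now rewrite <- app_assoc).
  assert (Hne : a <> []) by (unfold a; now destruct l1).
  assert (Ha : rooted a) by (apply (rooted_app_l _ Hw'), Hne).
  assert (Hau : rooted (a ++ [u])).
  { apply (rooted_app_l l2); [now rewrite <- app_assoc | now destruct a]. }
  assert (Hdup : ep_equiv G (a ++ [u]) a).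
  { unfold a. rewrite <- app_assoc. apply (ep_equiv_dup G l1 u []). }
  apply prefix_loop_of_ladder with a (map (app a) (prefixes (u :: l2)))
    (map (app a) (prefixes l2))
    ((a ++ [u], a) :: map (fun s => ((a ++ [u]) ++ s, a ++ s)) (prefixes l2));
    auto using prefixes_app.
  - split; [now apply Rsimplex4_near_first_rung|].
    apply ladder_near_of_equiv; auto. now rewrite <- app_assoc.
  - simpl. f_equal. rewrite !map_map. apply map_ext. intros s. now rewrite <- app_assoc.
  - simpl. f_equal. now rewrite map_map.
Qed.

Lemma Rsimplex4_near_tri (a : list X) (v x : X) :
  rooted a -> rooted (a ++ [v; x]) -> rooted (a ++ [x]) ->
  ep_equiv G (a ++ [v; x]) (a ++ [x]) -> ep_equiv G ((a ++ [x]) ++ [v]) (a ++ [v]) ->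
  Rsimplex4 near (a ++ [v]) a (a ++ [v; x]) (a ++ [x]).
Proof.
  intros Ha Havx Hax Hvx Hxv. assert (Hne := rooted_ne Ha).
  assert (Hav : rooted (a ++ [v])).
  { apply (rooted_app_l [x]); [now rewrite <- app_assoc | now destruct a]. }
  split; [|split; [|split; [|split; [|split]]]].
  - apply Redge_sym, Redge_near_snoc; auto.
  - replace (a ++ [v; x]) with ((a ++ [v]) ++ [x]) by now rewrite <- app_assoc.
    apply Redge_near_snoc; [rewrite <- app_assoc; exact Havx | now destruct a].
  - apply Redge_sym, Redge_near_of_equiv_snoc with v; auto using ep_equiv_sym.
  - apply Redge_near_of_equiv_snoc with x; auto.
  - apply Redge_near_snoc; auto.
  - now apply Redge_near_of_equiv.
Qed.

Lemma prefix_loop_tri (l1 l2 : list X) (u v x : X) :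
  Rsimplex3 G u v x -> rooted (l1 ++ u :: v :: x :: l2) ->
  prefix_loop (l1 ++ u :: v :: x :: l2) (l1 ++ u :: x :: l2).
Proof.
  intros H3 Hw.
  assert (Hw' := rooted_equiv (ep_equiv_tri l1 l2 H3) Hw).
  assert (Hvx : ep_equiv G (l1 ++ [u; v; x]) (l1 ++ [u; x])) by now apply ep_equiv_tri.
  assert (Hxv : ep_equiv G (l1 ++ [u; x; v]) (l1 ++ [u; v])).
  { apply ep_equiv_tri. destruct H3 as (?&?&?). split; [|split]; auto using Redge_sym. }
  set (a := l1 ++ [u]) in *.
  replace (l1 ++ u :: v :: x :: l2) with (a ++ v :: x :: l2) in *
    by (unfold a; now rewrite <- app_assoc).
  replace (l1 ++ u :: x :: l2) with (a ++ x :: l2) in * by (unfold a; now rewrite <- app_assoc).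
  replace (l1 ++ [u; v; x]) with (a ++ [v; x]) in * by (unfold a; now rewrite <- app_assoc).
  replace (l1 ++ [u; x; v]) with ((a ++ [x]) ++ [v]) in *
    by (unfold a; now rewrite <- !app_assoc).
  replace (l1 ++ [u; v]) with (a ++ [v]) in * by (unfold a; now rewrite <- app_assoc).
  replace (l1 ++ [u; x]) with (a ++ [x]) in * by (unfold a; now rewrite <- app_assoc).
  assert (Hne : a <> []) by (unfold a; now destruct l1).
  assert (Ha : rooted a) by (apply (rooted_app_l _ Hw), Hne).
  assert (Hav : rooted (a ++ [v])).
  { apply (rooted_app_l (x :: l2)); [now rewrite <- app_assoc | now destruct a]. }
  assert (Havx : rooted (a ++ [v; x])).
  { apply (rooted_app_l l2); [now rewrite <- app_assoc | now destruct a]. }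
  assert (Hax : rooted (a ++ [x])).
  { apply (rooted_app_l l2); [now rewrite <- app_assoc | now destruct a]. }
  apply prefix_loop_of_ladder with a (map (app a) (prefixes (v :: x :: l2)))
    (map (app a) (prefixes (x :: l2)))
    ((a ++ [v], a) :: (a ++ [v; x], a ++ [x]) ::
       map (fun s => ((a ++ [v; x]) ++ s, (a ++ [x]) ++ s)) (prefixes l2));
    auto using prefixes_app.
  - split; [now apply Rsimplex4_near_first_rung|]. split.
    + now apply Rsimplex4_near_tri.
    + apply ladder_near_of_equiv; auto; now rewrite <- app_assoc.
  - simpl. do 2 f_equal. rewrite !map_map. apply map_ext. intros s. now rewrite <- !app_assoc.
  - simpl. do 2 f_equal. rewrite !map_map. apply map_ext. intros s. now rewrite <- !app_assoc.
Qed.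

Lemma prefix_loop_of_equiv u v : ep_equiv G u v -> rooted u -> prefix_loop u v.
Proof.
  induction 1 as [u v []| u | u v Huv IH | u v w Huv IH1 Hvw IH2]; intros Hu.
  - now apply prefix_loop_dup.
  - now apply prefix_loop_tri.
  - now apply prefix_loop_refl.
  - apply prefix_loop_sym, IH, (rooted_equiv (ep_equiv_sym Huv) Hu).
  - assert (Hv := rooted_equiv Huv Hu).
    apply prefix_loop_trans with v; auto.
    split; [|split]; apply Redge_near_of_equiv; eauto using ep_equiv_trans.
Qed.

Lemma gp_cls_G_rooted {c : GPath X x0} {p} : gp_cls c G p -> rooted p /\ gp_cls c F p.
Proof.
  intros H. destruct (gp_cls_epath HG H) as (Hh&_&Hc).
  split; [now split|]. eapply gp_compat; eauto.
Qed.

Lemma Fstar_class_equiv {c d : GPath X x0} {p q} : Fstar G c d -> gp_cls c G p -> gp_cls d G q ->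
  ep_equiv G p (q ++ [gp_end c]).
Proof.
  intros (pc&pd&Hc&Hd&(xc&yc&xd&yd&Hpc&Hpd&_&_&Hcd)) Hp Hq.
  destruct (gp_cls_epath HG Hc) as (Hhc&Hlc&_).
  destruct (gp_cls_epath HG Hd) as (Hhd&_&_).
  destruct (gp_cls_epath HG Hq) as (Hhq&_&_).
  destruct Hpc as (Hxc&Hyc&_), Hpd as (Hxd&_&_).
  rewrite Hhc in Hxc. injection Hxc as <-. rewrite Hhd in Hxd. injection Hxd as <-.
  rewrite Hlc in Hyc. subst yc.
  eapply ep_equiv_trans; [eapply gp_cls_equiv; [exact HG|exact Hp|exact Hc]|].
  eapply ep_equiv_trans; [exact Hcd|].
  destruct q as [|y q']; [discriminate|]. injection Hhq as ->.
  eapply ep_equiv_trans.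
  { apply (ep_equiv_app [x0] [gp_end c]). eapply gp_cls_equiv; [exact HG|exact Hd|exact Hq]. }
  apply (ep_equiv_dup G []).
Qed.

Lemma Redge_near_of_Fstar {c d : GPath X x0} {p q} :
  Fstar G c d -> gp_cls c G p -> gp_cls d G q -> Redge near p q.
Proof.
  intros H Hp Hq. apply Redge_sym, Redge_near_of_equiv_snoc with (gp_end c).
  - apply (gp_cls_G_rooted Hq).
  - apply (gp_cls_G_rooted Hp).
  - exact (Fstar_class_equiv H Hp Hq).
Qed.

Lemma prefix_loop_of_Fstar {c d : GPath X x0} {p q} :
  Fstar G c d -> gp_cls c G p -> gp_cls d G q -> prefix_loop p q.
Proof.
  intros H Hp Hq.
  assert (Hpq := Fstar_class_equiv H Hp Hq). set (z := gp_end c) in Hpq.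
  destruct (gp_cls_G_rooted Hp) as [Rp _], (gp_cls_G_rooted Hq) as [Rq _].
  assert (Rqz := rooted_equiv Hpq Rp).
  assert (Hloop := prefix_loop_of_equiv Hpq Rp). unfold prefix_loop in *.
  rewrite prefixes_snoc in Hloop.
  destruct (prefixes_last (rooted_ne Rp)) as [P HP], (prefixes_last (rooted_ne Rq)) as [Q HQ].
  rewrite HP, HQ in *. rewrite !rev_app_distr in *. simpl in *. rewrite <- !app_assoc in *.
  simpl in *.
  eapply ep_equiv_trans; [|exact Hloop].
  apply ep_equiv_sym, ep_equiv_tri. split; [|split].
  - now apply Redge_near_of_equiv.
  - apply Redge_sym, Redge_near_snoc; auto using rooted_ne.
  - exact (Redge_near_of_Fstar H Hp Hq).
Qed.

Variable R : GPath X x0 -> GPath X x0 -> Prop.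
Hypothesis HR : subrel (Fstar F) R.

Lemma Fstar_of_close {c d : GPath X x0} {p q} :
  gp_cls c F p -> gp_cls d F q -> close p q -> Fstar F c d.
Proof.
  intros Hc Hd [C1 C2]. exists p, q. split; [auto|split; [auto|]].
  destruct (gp_cls_epath HF Hc) as (P1&P2&P3).
  destruct (gp_cls_epath HF Hd) as (Q1&Q2&Q3).
  exists x0, (gp_end c), x0, (gp_end d).
  split; [split; auto|]. split; [split; auto|].
  split; [now apply entourage_refl|]. split; [rewrite <- P2, <- Q2; auto|].
  eapply ep_equiv_trans; [apply C2|]. rewrite P2.
  destruct q as [|y q']; [discriminate|]. injection Q1 as ->.
  apply ep_equiv_sym, (ep_equiv_dup F []).
Qed.

Lemma Redge_R_of_near {c d : GPath X x0} {p q} :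
  Redge near p q -> gp_cls c F p -> gp_cls d F q -> Redge R c d.
Proof.
  intros ((_&_&Cpp)&(_&_&Cpq)&(_&_&Cqp)&(_&_&Cqq)) Hc Hd.
  repeat split; apply HR; eapply Fstar_of_close; eauto.
Qed.

Lemma Redge_R_lift p q : Redge near p q -> Redge R (lift p) (lift q).
Proof.
  intros H. apply (Redge_R_of_near (p := p) (q := q)); auto; apply lift_cls_F.
  - exact (proj1 (proj1 H)).
  - exact (proj1 (proj2 (proj2 (proj2 (proj2 H))))).
Qed.

Lemma ep_equiv_lift_prefix_loop u v : prefix_loop u v ->
  ep_equiv R (map lift (prefixes u) ++ rev (map lift (prefixes v))) [lift [x0]].
Proof.
  intros H. apply (ep_equiv_map lift Redge_R_lift) in H.
  now rewrite map_app, map_rev in H.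
Qed.

Lemma echain_lift_prefixes u : rooted u -> echain R (map lift (prefixes u)).
Proof. intros Hu. apply (echain_map lift _ Redge_R_lift), prefixes_chain, Hu. Qed.

Lemma hd_lift_prefixes u : rooted u -> hd_error (map lift (prefixes u)) = Some (lift [x0]).
Proof. intros [H _]. destruct u as [|a u]; [discriminate|]. now injection H as ->. Qed.

Lemma ep_equiv_cone_shift K Z c0 c' p p' : Fstar G c0 c' -> gp_cls c0 G p -> gp_cls c' G p' ->
  ep_equiv R (K ++ c0 :: c' :: rev (map lift (prefixes p')) ++ Z)
             (K ++ c0 :: rev (map lift (prefixes p)) ++ Z).
Proof.
  intros Hcc Hp Hp'.
  destruct (gp_cls_G_rooted Hp) as [Rp Fp], (gp_cls_G_rooted Hp') as [Rp' Fp'].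
  assert (N := Redge_near_of_Fstar Hcc Hp Hp').
  assert (Jp := lift_cls_F Rp). assert (Jp' := lift_cls_F Rp').
  assert (Hsimp1 : Rsimplex3 R c0 (lift p) c').
  { split; [|split].
    - exact (Redge_R_of_near (Redge_refl_l N) Fp Jp).
    - exact (Redge_R_of_near N Jp Fp').
    - exact (Redge_R_of_near N Fp Fp'). }
  assert (Hsimp2 : Rsimplex3 R (lift p) c' (lift p')).
  { split; [|split].
    - exact (Redge_R_of_near N Jp Fp').
    - exact (Redge_R_of_near (Redge_refl_r N) Fp' Jp').
    - exact (Redge_R_of_near N Jp Jp'). }
  assert (Hrr := ep_equiv_reroute (K ++ [c0]) (map lift (prefixes p)) (map lift (prefixes p')) Z
    (hd_lift_prefixes Rp) (echain_lift_prefixes Rp)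
    (ep_equiv_lift_prefix_loop (prefix_loop_of_Fstar Hcc Hp Hp'))).
  destruct (prefixes_last (rooted_ne Rp)) as [P HP], (prefixes_last (rooted_ne Rp')) as [P' HP'].
  rewrite last_map, HP, last_last, <- HP, <- !app_assoc in Hrr. simpl in Hrr.
  eapply ep_equiv_trans; [|exact Hrr].
  rewrite HP', map_app, rev_app_distr. simpl.
  eapply ep_equiv_trans; [apply ep_equiv_sym, (ep_equiv_tri K _ Hsimp1)|].
  pose proof (ep_equiv_tri (K ++ [c0]) (rev (map lift P') ++ Z) Hsimp2) as H.
  rewrite <- !app_assoc in H. exact H.
Qed.

Variable y0 : GPath X x0.
Hypothesis Hy0 : is_constant_gpath y0.

Lemma Redge_R_y0_lift : Redge R y0 (lift [x0]).
Proof.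
  apply (Redge_R_of_near (p := [x0]) (q := [x0])).
  - apply Redge_near_of_equiv, ep_equiv_refl. apply rooted_singleton.
  - apply Hy0, HF.
  - apply lift_cls_F, rooted_singleton.
Qed.

Lemma ep_equiv_cone l : hd_error l = Some y0 -> echain (Fstar G) l ->
  exists p, gp_cls (last l y0) G p /\
    ep_equiv R (l ++ rev (map lift (prefixes p)) ++ [y0]) [y0].
Proof.
  induction l as [|c' l IH] using rev_ind; intros Hh Hc; [discriminate|].
  destruct l as [|c l'] eqn:El.
  - injection Hh as ->. exists [x0]. split; [apply Hy0, HG|].
    apply (ep_equiv_backtrack R [] y0 [] (lift [x0]) []). split; [apply Redge_R_y0_lift|exact I].
  - assert (Hhl : hd_error l = Some y0) by (subst; exact Hh).
    rewrite <- El in *. assert (Hl : l <> []) by (subst; discriminate).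
    destruct (exists_snoc l y0 Hl) as [l0 Hl0]. set (c0 := last l y0) in *. clearbody c0.
    rewrite last_last.
    destruct (IH Hhl (echain_app_l _ _ _ Hc)) as (p&Hp&Hloop).
    assert (Hcc : Fstar G c0 c').
    { rewrite Hl0, <- app_assoc in Hc. apply echain_app in Hc. apply Hc. }
    destruct (gp_cls_exists c' G HG) as [p' Hp'].
    exists p'. split; [exact Hp'|].
    rewrite Hl0, <- !app_assoc in Hloop. simpl in Hloop.
    rewrite Hl0, <- !app_assoc. simpl.
    eapply ep_equiv_trans; [|exact Hloop]. exact (ep_equiv_cone_shift l0 [y0] p p' Hcc Hp Hp').
Qed.

Lemma loop_null_homotopic l : is_epath (Fstar G) y0 y0 l -> ep_equiv R l [y0].
Proof.
  intros (Hh&Hl&Hc).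
  destruct (ep_equiv_cone l Hh Hc) as (p&Hp&Hcone). rewrite Hl in Hp.
  destruct (gp_cls_G_rooted Hp) as [Rp Fp].
  assert (Hx0p : ep_equiv G [x0] p).
  { eapply gp_cls_equiv; [exact HG | apply Hy0, HG | exact Hp]. }
  assert (N : Redge near [x0] p)
    by (apply Redge_near_of_equiv; [apply rooted_singleton|exact Hx0p]).
  assert (Hsimp : Rsimplex3 R y0 (lift [x0]) (lift p)).
  { split; [|split]; [apply Redge_R_y0_lift | now apply Redge_R_lift |].
    exact (Redge_R_of_near N (proj2 Hy0 F HF) (lift_cls_F Rp)). }
  assert (Hbase := ep_equiv_lift_prefix_loop (prefix_loop_of_equiv Hx0p rooted_singleton)).
  destruct (exists_snoc l y0) as [l0 Hl0]; [now destruct l|]. rewrite Hl in Hl0.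
  destruct (prefixes_last (rooted_ne Rp)) as [P HP].
  rewrite HP, map_app, rev_app_distr in Hcone, Hbase. simpl in Hbase.
  eapply ep_equiv_trans; [|exact Hcone]. apply ep_equiv_sym. rewrite Hl0.
  simpl. rewrite <- !app_assoc. simpl.
  eapply ep_equiv_trans; [apply ep_equiv_sym, (ep_equiv_tri l0 _ Hsimp)|].
  pose proof (ep_equiv_app (l0 ++ [y0]) [y0] Hbase) as Hcut.
  rewrite <- !app_assoc in Hcut. simpl in Hcut.
  eapply ep_equiv_trans; [exact Hcut|].
  apply (ep_equiv_backtrack R l0 y0 [] (lift [x0]) []). split; [apply Redge_R_y0_lift|exact I].
Qed.

End Contraction.

Theorem mainTheorem11 (X : UniformSpace) (x0 : X) :
  is_uniform X -> uniformly_joinable X ->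
  forall y0 : GP X x0, is_constant_gpath y0 -> pro_pi1_trivial (GP X x0) y0.
Proof.
  intros HU HJ y0 Hy0 E (F & HF & HFE).
  destruct HU as (_ & Hrefl & _ & Hmeet & _).
  destruct (HJ F HF) as (G1 & HG1 & Hjoin).
  set (G := fun a b => G1 a b /\ F a b).
  assert (HG : entourage X G) by now apply Hmeet.
  assert (HGF : subrel G F) by (intros a b H; apply H).
  exists (Fstar G). split; [|split].
  - exists G. split; [exact HG | now intros c d].
  - intros c d H. apply HFE, (Fstar_mono HF HG HGF H).
  - intros l. apply (loop_null_homotopic Hrefl HF Hjoin HG); auto.
    intros a b H; apply H.
Qed.
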